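(* Let $\Bbbk$ be a field, $n\ge2$, $q\in\Bbbk$ a primitive $n$-th root of unity, $T_n(q)$ the Taft algebra and $A$ a unital associative $\Bbbk$-algebra. Let $\cdot:T_n(q)\otimes A\to A$ be a partial action of $T_n(q)$ on $A$. If $g\cdot 1_A=1_A$, then $\cdot$ is a global action.
   Context: The Taft algebra $T_n(q)$ is the Hopf algebra generated by $g,x$ with relations $g^n=1$, $x^n=0$, $xg=qgx$, $g$ group-like, $\Delta(x)=x\otimes1+g\otimes x$, $\varepsilon(x)=0$. For a bialgebra $H$ with $\Delta(h)=h_1\otimes h_2$, a partial action of $H$ on $A$ is a linear map $\cdot:H\otimes A\to A$ with $1_H\cdot a=a$, $h\cdot(ab)=(h_1\cdot a)(h_2\cdot b)$ and $h\cdot(k\cdot a)=(h_1\cdot1_A)(h_2k\cdot a)$ for all $h,k\in H$, $a,b\in A$. It is global if moreover $h\cdot(k\cdot a)=hk\cdot a$ for all $h,k,a$ (equivalently $h\cdot1_A=\varepsilon(h)1_A$ for all $h$). *)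

From HB Require Import structures.
From mathcomp Require Import all_boot all_order all_algebra.
Set Implicit Arguments. Unset Strict Implicit. Unset Printing Implicit Defensive.
Import Order.TTheory GRing.Theory Num.Theory.
Local Open Scope ring_scope.

Section Taft.
Variables (k : fieldType) (n : nat) (q : k).

(* index (i, j) stands for the basis element g^i x^j *)
Local Notation tidx := ('I_n * 'I_n)%type.

Local Notation taft := {ffun tidx -> k^o}.
(* T_n(q) (x) T_n(q): coefficient functions on pairs of basis elements *)
Local Notation taft2 := {ffun (tidx * tidx) -> k^o}.

Definition tbasis (s : tidx) : taft := [ffun p => (p == s)%:R].

(* tmon i j = g^i x^j, for arbitrary naturals i, j;
   this uses g^n = 1 (i taken mod n) and x^n = 0 (zero when j >= n). *)
Definition tmon (i j : nat) : taft :=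
  [ffun p : tidx => ((p.1 == (i %% n)%N :> nat) && (p.2 == j :> nat))%:R].

(* product of basis elements: (g^a x^b)(g^c x^d) = q^(bc) g^(a+c) x^(b+d),
   from x g = q g x. *)
Definition tbmul (s t : tidx) : taft :=
  q ^+ (s.2 * t.1)%N *: tmon (s.1 + t.1)%N (s.2 + t.2)%N.

Definition tmul (u v : taft) : taft :=
  \sum_(s : tidx) \sum_(t : tidx) (u s * v t) *: tbmul s t.

Definition ttens (u v : taft) : taft2 := [ffun p => u p.1 * v p.2].

Definition tmul2 (U V : taft2) : taft2 :=
  \sum_(s : tidx * tidx) \sum_(t : tidx * tidx)
     (U s * V t) *: ttens (tbmul s.1 t.1) (tbmul s.2 t.2).

Definition delta_x : taft2 := ttens (tmon 0 1) (tmon 0 0) + ttens (tmon 1 0) (tmon 0 1).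

(* Delta(x^b), computed as Delta(x)^b since Delta is an algebra map *)
Fixpoint delta_xpow (b : nat) : taft2 :=
  if b is b'.+1 then tmul2 (delta_xpow b') delta_x else ttens (tmon 0 0) (tmon 0 0).

(* Delta(g^a x^b) = (g^a (x) g^a) Delta(x)^b  (g group-like) *)
Definition tdelta_b (s : tidx) : taft2 :=
  tmul2 (ttens (tmon s.1 0) (tmon s.1 0)) (delta_xpow s.2).

Definition tdelta (h : taft) : taft2 := \sum_(s : tidx) h s *: tdelta_b s.

End Taft.

Notation taft k n := {ffun ('I_n * 'I_n)%type -> (GRing.Field.sort k)^o}.

(* A linear map T_n(q) (x) A -> A, presented as a bilinear map T_n(q) -> A -> A. *)
Definition taft_bilinear (k : fieldType) (n : nat) (A : algType k)
    (act : taft k n -> A -> A) : Prop :=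
  (forall (c : k) (h h' : taft k n) (a : A), act (c *: h + h') a = c *: act h a + act h' a) /\
  (forall (h : taft k n) (c : k) (a b : A), act h (c *: a + b) = c *: act h a + act h b).

(* Partial action of T_n(q) on A (Sweedler sums expanded in the basis of T (x) T). *)
Definition taft_partial_action (k : fieldType) (n : nat) (q : k) (A : algType k)
    (act : taft k n -> A -> A) : Prop :=
  [/\ forall a : A, act (tmon k n 0 0) a = a,
      forall (h : taft k n) (a b : A),
        act h (a * b) = \sum_(p : ('I_n * 'I_n) * ('I_n * 'I_n))
           tdelta q h p *: (act (tbasis k p.1) a * act (tbasis k p.2) b)
    & forall (h h' : taft k n) (a : A),
        act h (act h' a) = \sum_(p : ('I_n * 'I_n) * ('I_n * 'I_n))
           tdelta q h p *: (act (tbasis k p.1) 1 * act (tmul q (tbasis k p.2) h') a)].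

Definition taft_global_action (k : fieldType) (n : nat) (q : k) (A : algType k)
    (act : taft k n -> A -> A) : Prop :=
  forall (h h' : taft k n) (a : A), act h (act h' a) = act (tmul q h h') a.

(* Take h = g in the partial action axiom h.(h'.a) = (h_1.1)(h_2 h'.a): as g is
   group-like and g.1 = 1, this reads g.(h'.a) = gh'.a.  For h = x, with
   Δ(x) = x ⊗ 1 + g ⊗ x, taking h' = a = 1 gives x.1 = x.1 + x.1, so x.1 = 0,
   and then x.(h'.a) = xh'.a.  Since g and x generate T_n(q), it follows that
   h.1 = ε(h)1 for every h, and the axiom becomes h.(h'.a) = ε(h_1) h_2h'.a =
   hh'.a by the counit law. *)

From HB Require Import structures.
From mathcomp Require Import all_boot all_order all_algebra.
Import GRing.Theory.
Local Open Scope ring_scope.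
Set Implicit Arguments. Unset Strict Implicit.

Section FiniteFunctions.
Variable k : fieldType.

Lemma scale_regularE (a b : k) : a *: (b : k^o) = a * b.
Proof. by []. Qed.

Lemma sum_indicator_scale (I : finType) (V : lmodType k) (s0 : I) (F : I -> V) :
  \sum_s (((s == s0)%:R : k) *: F s) = F s0.
Proof.
rewrite (bigD1 s0) //= eqxx scale1r big1 ?addr0 // => s /negbTE ->.
by rewrite scale0r.
Qed.

Lemma ffun_sum_delta (I : finType) (f : {ffun I -> k^o}) :
  f = \sum_t f t *: [ffun p => ((p == t)%:R : k^o)].
Proof.
apply/ffunP => p; rewrite sum_ffunE -[LHS](sum_indicator_scale (V := k^o) p f).
by apply: eq_bigr => t _; rewrite !ffunE eq_sym scale_regularE mulrC.
Qed.

Lemma sum_scale_ffunD (I : finType) (V : lmodType k) (f f' : {ffun I -> k^o})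
    (F : I -> V) :
  \sum_i (f + f') i *: F i = \sum_i f i *: F i + \sum_i f' i *: F i.
Proof. by rewrite -big_split; apply: eq_bigr => i _; rewrite ffunE scalerDl. Qed.

End FiniteFunctions.

Section TaftAlgebra.
Variables (k : fieldType) (m : nat) (q : k).
Local Notation n := m.+1.
Local Notation tidx := ('I_n * 'I_n)%type.
Local Notation T := (taft k n).
Local Notation T2 := {ffun (tidx * tidx) -> k^o}.

Lemma tbasisE (s p : tidx) : tbasis k s p = (p == s)%:R.
Proof. by rewrite ffunE. Qed.

Lemma ttensE (u v : T) p : ttens u v p = u p.1 * v p.2.
Proof. by rewrite ffunE. Qed.

Lemma ttens_tbasis (s t : tidx) :
  ttens (tbasis k s) (tbasis k t) = [ffun p => ((p == (s, t))%:R : k^o)].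
Proof.
apply/ffunP => -[p1 p2]; rewrite !ffunE -natrM mulnb.
by rewrite xpair_eqE.
Qed.

Lemma tmon_tbasis (s : tidx) : tmon k n s.1 s.2 = tbasis k s.
Proof. by apply/ffunP => p; rewrite !ffunE modn_small. Qed.

Lemma tmon_inord i j : (i <= m)%N -> (j <= m)%N ->
  tmon k n i j = tbasis k (inord i, inord j).
Proof.
move=> im jm; apply/ffunP => p.
by case: p => p1 p2; rewrite !ffunE /= xpair_eqE -!val_eqE /= !inordK // modn_small.
Qed.

Lemma tmon_mod i j : tmon k n (i %% n) j = tmon k n i j.
Proof. by apply/ffunP => p; rewrite !ffunE modn_mod. Qed.

Lemma tmon_nilpotent i j : (n <= j)%N -> tmon k n i j = 0.
Proof.
move=> nj; apply/ffunP => p; rewrite !ffunE.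
case: (p.2 =P j :> nat) (ltn_ord p.2) => [->|_]; last by rewrite andbF.
by rewrite ltnNge nj.
Qed.

Lemma tmul_linl (c : k) (u u' v : T) :
  tmul q (c *: u + u') v = c *: tmul q u v + tmul q u' v.
Proof.
rewrite /tmul scaler_sumr -big_split; apply: eq_bigr => s _.
rewrite scaler_sumr -big_split; apply: eq_bigr => t _.
by rewrite !ffunE scale_regularE mulrDl scalerDl [in RHS]scalerA mulrA.
Qed.

Lemma tmul_linr (c : k) (u v v' : T) :
  tmul q u (c *: v + v') = c *: tmul q u v + tmul q u v'.
Proof.
rewrite /tmul scaler_sumr -big_split; apply: eq_bigr => s _.
rewrite scaler_sumr -big_split; apply: eq_bigr => t _.
by rewrite !ffunE scale_regularE mulrDr scalerDl [in RHS]scalerA mulrCA.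
Qed.

Lemma tmul0 (v : T) : tmul q 0 v = 0.
Proof.
by rewrite /tmul big1 // => s _; rewrite big1 // => t _; rewrite ffunE mul0r scale0r.
Qed.

Lemma tmulr0 (v : T) : tmul q v 0 = 0.
Proof.
by rewrite /tmul big1 // => s _; rewrite big1 // => t _; rewrite ffunE mulr0 scale0r.
Qed.

Lemma tmulZl (c : k) (u v : T) : tmul q (c *: u) v = c *: tmul q u v.
Proof. by rewrite -[c *: u]addr0 tmul_linl tmul0 addr0. Qed.

Lemma tmulZr (c : k) (u v : T) : tmul q u (c *: v) = c *: tmul q u v.
Proof. by rewrite -[c *: v]addr0 tmul_linr tmulr0 addr0. Qed.

Lemma tmul_suml (I : Type) (r : seq I) (F : I -> T) v :
  tmul q (\sum_(i <- r) F i) v = \sum_(i <- r) tmul q (F i) v.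
Proof.
apply: (big_ind2 (fun x y => tmul q x v = y)) => //; first exact: tmul0.
by move=> x1 x2 y1 y2 <- <-; rewrite -[tmul q x1 v]scale1r -tmul_linl scale1r.
Qed.

Lemma tmul_sumr (I : Type) (r : seq I) (F : I -> T) v :
  tmul q v (\sum_(i <- r) F i) = \sum_(i <- r) tmul q v (F i).
Proof.
apply: (big_ind2 (fun x y => tmul q v x = y)) => //; first exact: tmulr0.
by move=> x1 x2 y1 y2 <- <-; rewrite -[tmul q v x1]scale1r -tmul_linr scale1r.
Qed.

Lemma tmul_tbasisl (s : tidx) (v : T) :
  tmul q (tbasis k s) v = \sum_t v t *: tbmul q s t.
Proof.
rewrite /tmul.
under eq_bigr => s' _ do under eq_bigr => t _ do rewrite tbasisE -scalerA.
by under eq_bigr => s' _ do rewrite -scaler_sumr; rewrite sum_indicator_scale.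
Qed.

Lemma tmul_tbasis (s t : tidx) : tmul q (tbasis k s) (tbasis k t) = tbmul q s t.
Proof.
rewrite tmul_tbasisl; under eq_bigr => t' _ do rewrite tbasisE.
exact: sum_indicator_scale.
Qed.

Lemma tmul_tmon a b c d :
  tmul q (tmon k n a b) (tmon k n c d) = q ^+ (b * (c %% n)) *: tmon k n (a + c) (b + d).
Proof.
have [nb|bn] := leqP n b.
  rewrite [tmon k n a b]tmon_nilpotent // tmul0 tmon_nilpotent ?scaler0 //.
  exact: leq_trans nb (leq_addr _ _).
have [nd|dn] := leqP n d.
  rewrite [tmon k n c d]tmon_nilpotent // tmulr0 tmon_nilpotent ?scaler0 //.
  exact: leq_trans nd (leq_addl _ _).
have modm x : (x %% n <= m)%N by rewrite -ltnS ltn_mod.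
rewrite -(tmon_mod a) -(tmon_mod c) !(tmon_inord (modm _)) // tmul_tbasis /tbmul /=.
by rewrite !inordK ?ltnS ?modm //; congr (_ *: _); rewrite -tmon_mod modnDm tmon_mod.
Qed.

Lemma sum_ttens_tbasis (V : lmodType k) (s t : tidx) (F : tidx * tidx -> V) :
  \sum_p ttens (tbasis k s) (tbasis k t) p *: F p = F (s, t).
Proof.
rewrite ttens_tbasis; under eq_bigr => p _ do rewrite ffunE.
exact: sum_indicator_scale.
Qed.

Lemma tmul_g_tmon i j : tmul q (tmon k n 1 0) (tmon k n i j) = tmon k n i.+1 j.
Proof. by rewrite tmul_tmon mul0n expr0 scale1r. Qed.

Lemma tmul_x_tmon j : tmul q (tmon k n 0 1) (tmon k n 0 j) = tmon k n 0 j.+1.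
Proof. by rewrite tmul_tmon mod0n muln0 expr0 scale1r. Qed.

Lemma tmul2_tbasisl (s t : tidx) (V : T2) :
  tmul2 q (ttens (tbasis k s) (tbasis k t)) V =
  \sum_p V p *: ttens (tbmul q s p.1) (tbmul q t p.2).
Proof.
rewrite /tmul2 ttens_tbasis.
under eq_bigr => p _ do under eq_bigr => p' _ do rewrite ffunE -scalerA.
by under eq_bigr => p _ do rewrite -scaler_sumr; rewrite sum_indicator_scale.
Qed.

Lemma tmul2_tbasisr (s t : tidx) (U : T2) :
  tmul2 q U (ttens (tbasis k s) (tbasis k t)) =
  \sum_p U p *: ttens (tbmul q p.1 s) (tbmul q p.2 t).
Proof.
rewrite /tmul2 ttens_tbasis.
under eq_bigr => p _ do under eq_bigr => p' _ do rewrite ffunE mulrC -scalerA.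
by under eq_bigr => p _ do rewrite sum_indicator_scale.
Qed.

Lemma tmon00 : tmon k n 0 0 = tbasis k (ord0, ord0).
Proof. exact: (tmon_tbasis (ord0, ord0)). Qed.

Lemma tbmul1 (t : tidx) : tbmul q (ord0, ord0) t = tbasis k t.
Proof. by rewrite /tbmul /= mul0n expr0 scale1r !add0n tmon_tbasis. Qed.

Lemma tbmulr1 (s : tidx) : tbmul q s (ord0, ord0) = tbasis k s.
Proof. by rewrite /tbmul /= muln0 expr0 scale1r !addn0 tmon_tbasis. Qed.

Lemma tmul1 (h : T) : tmul q (tmon k n 0 0) h = h.
Proof.
rewrite tmon00 tmul_tbasisl [RHS]ffun_sum_delta.
by apply: eq_bigr => t _; rewrite tbmul1.
Qed.

Lemma tmul2_1 (V : T2) : tmul2 q (ttens (tmon k n 0 0) (tmon k n 0 0)) V = V.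
Proof.
rewrite tmon00 tmul2_tbasisl [RHS]ffun_sum_delta.
by apply: eq_bigr => -[s t] _; rewrite !tbmul1 ttens_tbasis.
Qed.

Lemma tmul2r1 (U : T2) : tmul2 q U (ttens (tmon k n 0 0) (tmon k n 0 0)) = U.
Proof.
rewrite tmon00 tmul2_tbasisr [RHS]ffun_sum_delta.
by apply: eq_bigr => -[s t] _; rewrite !tbmulr1 ttens_tbasis.
Qed.

Lemma tdelta_tbasis (s : tidx) : tdelta q (tbasis k s) = tdelta_b q s.
Proof.
rewrite /tdelta; under eq_bigr => t _ do rewrite tbasisE.
exact: sum_indicator_scale.
Qed.

Lemma tdelta_grouplike i :
  tdelta q (tmon k n i 0) = ttens (tmon k n i 0) (tmon k n i 0).
Proof.
have im : (i %% n <= m)%N by rewrite -ltnS ltn_mod.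
rewrite -[in LHS]tmon_mod [in LHS]tmon_inord // tdelta_tbasis /tdelta_b /=.
by rewrite !inordK // tmul2r1 tmon_mod.
Qed.

Lemma tdelta_x : (0 < m)%N -> tdelta q (tmon k n 0 1) = delta_x k n.
Proof.
move=> m_gt0; rewrite [in LHS]tmon_inord // tdelta_tbasis /tdelta_b /=.
by rewrite !inordK // tmul2_1 /= tmul2_1.
Qed.

Definition teps (u : T) : k := \sum_s u s * ((s.2 : nat) == 0%N)%:R.

Definition teps_id (U : T2) : T :=
  \sum_p (U p * ((p.1.2 : nat) == 0%N)%:R) *: tbasis k p.2.

Fact teps_id_is_linear : linear teps_id.
Proof.
move=> c U V; rewrite /teps_id scaler_sumr -big_split; apply: eq_bigr => p _.
by rewrite !ffunE scale_regularE mulrDl scalerDl scalerA mulrA.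
Qed.

HB.instance Definition _ :=
  GRing.isLinear.Build k T2 T _ teps_id teps_id_is_linear.

Lemma teps_tbasis (s : tidx) : teps (tbasis k s) = ((s.2 : nat) == 0%N)%:R.
Proof.
rewrite /teps; under eq_bigr => t _ do rewrite tbasisE.
exact: (sum_indicator_scale (V := k^o)).
Qed.

Lemma tepsZ (c : k) (u : T) : teps (c *: u) = c * teps u.
Proof.
by rewrite /teps mulr_sumr; apply: eq_bigr => s _; rewrite ffunE scale_regularE mulrA.
Qed.

Lemma teps_tmon i j : teps (tmon k n i j) = (j == 0%N)%:R.
Proof.
have [nj|jn] := leqP n j.
  by rewrite tmon_nilpotent // -(scale0r 0) tepsZ mul0r; case: j nj.
have im : (i %% n <= m)%N by rewrite -ltnS ltn_mod.
by rewrite -tmon_mod tmon_inord // teps_tbasis /= inordK.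
Qed.

Lemma teps_tbmul (s t : tidx) :
  teps (tbmul q s t) = ((s.2 : nat) == 0%N)%:R * ((t.2 : nat) == 0%N)%:R.
Proof.
rewrite /tbmul tepsZ teps_tmon addn_eq0.
by case: (s.2 : nat) => [|j]; rewrite ?mul0n ?expr0 ?mul1r ?mulr0 ?mul0r.
Qed.

Lemma teps_id_ttens (u v : T) : teps_id (ttens u v) = teps u *: v.
Proof.
rewrite [v in RHS]ffun_sum_delta /teps scaler_suml.
under [RHS]eq_bigr => s _ do rewrite scaler_sumr.
rewrite pair_big; apply: eq_bigr => -[s t] _ /=.
by rewrite ttensE scalerA mulrAC.
Qed.

Lemma teps_id_tmul2 (U V : T2) :
  teps_id (tmul2 q U V) = tmul q (teps_id U) (teps_id V).
Proof.
rewrite /tmul2 linear_sum [teps_id U]/teps_id tmul_suml; apply: eq_bigr => s _.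
rewrite linear_sum tmulZl [teps_id V]/teps_id tmul_sumr scaler_sumr.
apply: eq_bigr => t _.
rewrite linearZ /= teps_id_ttens teps_tbmul tmulZr tmul_tbasis !scalerA.
by rewrite mulrACA.
Qed.

Lemma teps_id_delta_xpow j : teps_id (delta_xpow n q j) = tmon k n 0 j.
Proof.
elim: j => [|j IH] /=; first by rewrite teps_id_ttens teps_tmon scale1r.
rewrite teps_id_tmul2 IH /delta_x linearD /= !teps_id_ttens !teps_tmon /=.
by rewrite scale0r scale1r add0r tmul_tmon mod0n muln0 expr0 scale1r addn1.
Qed.

Lemma teps_id_tdelta (h : T) : teps_id (tdelta q h) = h.
Proof.
rewrite /tdelta linear_sum [RHS]ffun_sum_delta; apply: eq_bigr => s _.
rewrite linearZ /= /tdelta_b teps_id_tmul2 teps_id_ttens teps_tmon scale1r.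
by rewrite teps_id_delta_xpow tmul_tmon mul0n expr0 scale1r addn0 add0n tmon_tbasis.
Qed.

End TaftAlgebra.

Section PartialAction.
Variables (k : fieldType) (m : nat) (q : k) (A : algType k).
Local Notation n := m.+1.
Local Notation T := (taft k n).
Variable act : T -> A -> A.

Hypothesis act_linl :
  forall (c : k) (h h' : T) (a : A), act (c *: h + h') a = c *: act h a + act h' a.
Hypothesis act_linr :
  forall (h : T) (c : k) (a b : A), act h (c *: a + b) = c *: act h a + act h b.
Hypothesis act1 : forall a : A, act (tmon k n 0 0) a = a.
Hypothesis act_act : forall (h h' : T) (a : A),
  act h (act h' a) = \sum_p tdelta q h p *:
    (act (tbasis k p.1) 1 * act (tmul q (tbasis k p.2) h') a).

Lemma act0 a : act 0 a = 0.
Proof.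
apply: (addrI (act 0 a)).
by rewrite addr0 -{1}(scale1r (act 0 a)) -act_linl scale1r addr0.
Qed.

Lemma actr0 h : act h 0 = 0.
Proof.
apply: (addrI (act h 0)).
by rewrite addr0 -{1}(scale1r (act h 0)) -act_linr scale1r addr0.
Qed.

Lemma actZr h (c : k) a : act h (c *: a) = c *: act h a.
Proof. by rewrite -[c *: a]addr0 act_linr actr0 addr0. Qed.

Lemma act_sum (I : Type) (r : seq I) (c : I -> k) (F : I -> T) a :
  act (\sum_(i <- r) c i *: F i) a = \sum_(i <- r) c i *: act (F i) a.
Proof.
apply: (big_ind2 (fun h b => act h a = b)) => [|h1 h2 b1 b2 <- <-|i _].
- exact: act0.
- by rewrite -[act h1 a]scale1r -act_linl scale1r.
- by rewrite -[_ *: F i]addr0 act_linl act0 addr0.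
Qed.

Lemma act_global_of_unit :
  (forall s, act (tbasis k s) 1 = teps (tbasis k s) *: 1) -> taft_global_action q act.
Proof.
move=> act_unit h h' a; rewrite act_act.
under eq_bigr => p _ do rewrite act_unit teps_tbasis -scalerAl mul1r scalerA.
rewrite -act_sum -[in RHS](teps_id_tdelta q h) /teps_id tmul_suml.
by congr (act _ a); apply: eq_bigr => p _; rewrite tmulZl.
Qed.

Section GroupLikeFixesUnit.
Hypotheses (m_gt0 : (0 < m)%N) (act_g1 : act (tmon k n 1 0) 1 = 1).

Lemma act_act_ttens_tmon i j i' j' h' a :
  (i <= m)%N -> (j <= m)%N -> (i' <= m)%N -> (j' <= m)%N ->
  \sum_p ttens (tmon k n i j) (tmon k n i' j') p *:
    (act (tbasis k p.1) 1 * act (tmul q (tbasis k p.2) h') a) =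
  act (tmon k n i j) 1 * act (tmul q (tmon k n i' j') h') a.
Proof. by move=> *; rewrite !tmon_inord // sum_ttens_tbasis. Qed.

Lemma act_g_act h' a :
  act (tmon k n 1 0) (act h' a) = act (tmul q (tmon k n 1 0) h') a.
Proof. by rewrite act_act tdelta_grouplike act_act_ttens_tmon // act_g1 mul1r. Qed.

Lemma act_x1 : act (tmon k n 0 1) 1 = 0.
Proof.
(* x.1 = x.(1.1) = (x.1)(1.1) + (g.1)(x.1) = x.1 + x.1 *)
apply: (addrI (act (tmon k n 0 1) 1)).
rewrite addr0 -{3}(act1 1) act_act tdelta_x // sum_scale_ffunD !act_act_ttens_tmon //.
by rewrite tmul1 act1 mulr1 act_g1 mul1r tmul_tmon mod0n muln0 expr0 scale1r.
Qed.

Lemma act_x_act h' a :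
  act (tmon k n 0 1) (act h' a) = act (tmul q (tmon k n 0 1) h') a.
Proof.
rewrite act_act tdelta_x // sum_scale_ffunD !act_act_ttens_tmon //.
by rewrite act_x1 mul0r add0r act_g1 mul1r.
Qed.

Lemma act_tmon1 i j : act (tmon k n i j) 1 = teps (tmon k n i j) *: 1.
Proof.
rewrite teps_tmon; elim: i => [|i IHi].
  elim: j => [|j IHj]; first by rewrite act1 scale1r.
  by rewrite -(tmul_x_tmon _ q) -act_x_act IHj actZr act_x1 scaler0 scale0r.
by rewrite -(tmul_g_tmon _ q) -act_g_act IHi actZr act_g1.
Qed.

End GroupLikeFixesUnit.

End PartialAction.

Unset Implicit Arguments. Set Strict Implicit.

Theorem proposition3p2 (k : fieldType) (n : nat) (q : k) (A : algType k)
    (act : taft k n -> A -> A) :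
  (2 <= n)%N -> n.-primitive_root q ->
  taft_bilinear act -> taft_partial_action q act ->
  act (tmon k n 1 0) 1 = 1 ->
  taft_global_action q act.
Proof.
case: n act => [|m] act // m_gt0 _ [act_linl act_linr] [act1 _ act_act] act_g1.
apply: (act_global_of_unit act_linl act_act) => s.
by rewrite -tmon_tbasis (act_tmon1 act_linr act1 act_act m_gt0 act_g1).
Qed.
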